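(* Let $G=(V,E)$ be an infinite, connected, locally finite graph (no self-loops) and let $v\in V$. Then the sequence $\big(\mathbb{P}_v(\tau_v=2t)\big)_{t\geq 1}$ is non-increasing in $t$.
   Context: $(X_t)$ is simple random walk on $G$ with $X_0=v$ and $\tau_v=\min\{t\geq 1:X_t=v\}$. *)

From HB Require Import structures.
From mathcomp Require Import all_boot all_order all_algebra.
Set Implicit Arguments. Unset Strict Implicit. Unset Printing Implicit Defensive.
Import Order.TTheory GRing.Theory Num.Theory.

(* A locally finite simple graph on a vertex type V : eqType is given by the
   finite list of neighbours nb x of each vertex x. *)
Definition adjn (V : eqType) (nb : V -> seq V) : rel V := fun x y => y \in nb x.

Definition simple_locfin_graph (V : eqType) (nb : V -> seq V) : Prop :=
  (forall x, uniq (nb x)) /\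
  (forall x, x \notin nb x) /\
  (forall x y, (y \in nb x) = (x \in nb y)).

Definition graph_connected (V : eqType) (nb : V -> seq V) : Prop :=
  forall x y : V, exists p : seq V, path (adjn nb) x p /\ last x p = y.

Definition infinite_type (V : eqType) : Prop :=
  forall s : seq V, exists x : V, x \notin s.

Local Open Scope ring_scope.

(* first_hit nb v n x = P_x( min{t >= 1 : X_t = v} = n ) for the simple random
   walk (uniform step to a neighbour), computed by first-step analysis:
   it is the sum over walks x = x_0, x_1, ..., x_n = v with x_i <> v for
   0 < i < n of prod_{i<n} 1/deg(x_i). *)
Fixpoint first_hit (V : eqType) (nb : V -> seq V) (v : V) (n : nat) (x : V)
  : rat :=
  match n with
  | 0 => 0
  | n'.+1 =>
      (\sum_(y <- nb x)
          (if n' is 0 then (y == v)%:R else (y != v)%:R * first_hit nb v n' y))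
        / (size (nb x))%:R
  end.

Definition return_prob (V : eqType) (nb : V -> seq V) (v : V) (n : nat) : rat :=
  first_hit nb v n v.

From HB Require Import structures.
From mathcomp Require Import all_boot all_order all_algebra zify ring lra.
Set Implicit Arguments. Unset Strict Implicit. Unset Printing Implicit Defensive.
Import Order.TTheory GRing.Theory Num.Theory.
Local Open Scope ring_scope.

(* Write [Q] for the transition operator of the walk killed on entering [v],
   [Q f x = deg(x)^-1 sum_{y ~ x, y <> v} f y], and [g = P_.(tau_v = 1)].
   Then [P_v(tau_v = n + 2) = <g, Q^n g> / deg v] for the inner product
   [<f, h> = sum_{x <> v} deg x f x h x].  Reversibility makes [Q]
   self-adjoint and Jensen's inequality makes it a contraction, so
   [P_v(tau_v = 2t + 2) = |Q^t g|^2 / deg v] is non-increasing in [t]. *)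

Lemma big_seq_restrict (R : pzRingType) (T : eqType) (s L : seq T) (F : T -> R) :
  uniq s -> uniq L -> (forall y, y \in s -> F y != 0 -> y \in L) ->
  \sum_(y <- s) F y = \sum_(y <- L) (y \in s)%:R * F y.
Proof.
move=> us uL sL.
rewrite (bigID (mem L)) /= [X in _ + X]big1_seq ?addr0; last first.
  by move=> y /andP[yL ys]; apply/eqP; apply: contraNT yL; apply: sL.
transitivity (\sum_(y <- L | y \in s) F y); last first.
  by rewrite big_mkcond; apply: eq_bigr => y _; case: (y \in s); rewrite ?mul1r ?mul0r.
rewrite -big_filter -[RHS]big_filter; apply/perm_big/uniq_perm; rewrite ?filter_uniq //.
by move=> y; rewrite !mem_filter andbC.
Qed.

Lemma sum_eq_mem (R : pzRingType) (T : eqType) (s : seq T) (v : T) : uniq s ->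
  \sum_(y <- s) (y == v)%:R = (v \in s)%:R :> R.
Proof.
move=> us; rewrite (eq_bigr (fun y => if y == v then 1 else 0)); last by move=> y _; case: eqP.
by rewrite -big_mkcond big_const_seq iter_addr_0 count_uniq_mem.
Qed.

Lemma sumr_const_seq (R : nmodType) (T : Type) (s : seq T) (c : R) :
  \sum_(x <- s) c = c *+ size s.
Proof. by rewrite big_const_seq count_predT iter_addr_0. Qed.

Section KilledWalk.
Variables (V : eqType) (nb : V -> seq V) (v : V).
Hypothesis nb_uniq : forall x, uniq (nb x).
Hypothesis nb_sym : forall x y, (y \in nb x) = (x \in nb y).

Lemma exchange_big_adj (L : seq V) (F : V -> V -> rat) : uniq L ->
  (forall x y, x \in L -> y \in nb x -> F x y != 0 -> y \in L) ->
  (forall x y, y \in L -> x \in nb y -> F x y != 0 -> x \in L) ->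
  \sum_(x <- L) \sum_(y <- nb x) F x y = \sum_(y <- L) \sum_(x <- nb y) F x y.
Proof.
move=> uL closedL closedL'.
transitivity (\sum_(x <- L) \sum_(y <- L) (y \in nb x)%:R * F x y).
  by rewrite !big_seq; apply: eq_bigr => x xL; apply: big_seq_restrict => // y; apply: closedL.
transitivity (\sum_(y <- L) \sum_(x <- L) (x \in nb y)%:R * F x y); last first.
  rewrite !big_seq; apply: eq_bigr => y yL.
  by rewrite (big_seq_restrict (L := L) (F := F^~ y)) // => x; apply: closedL'.
by rewrite exchange_big /=; apply: eq_bigr => y _; apply: eq_bigr => x _; rewrite nb_sym.
Qed.

Fixpoint ball (k : nat) : seq V :=
  if k is k'.+1 then undup (ball k' ++ flatten (map nb (ball k'))) else [:: v].

Lemma ball_uniq k : uniq (ball k).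
Proof. by case: k => [|k] //=; apply: undup_uniq. Qed.

Lemma ball_nb k x y : x \in ball k -> y \in nb x -> y \in ball k.+1.
Proof.
by move=> xk yx; rewrite mem_undup mem_cat; apply/orP; right; apply/flatten_mapP; exists x.
Qed.

Lemma ball_mono k j x : (k <= j)%N -> x \in ball k -> x \in ball j.
Proof.
move=> /subnKC <-; elim: (j - k)%N => [|i IH] xk; first by rewrite addn0.
by rewrite addnS /= mem_undup mem_cat IH.
Qed.

Definition deg x : rat := (size (nb x))%:R.

Definition killed (f : V -> rat) x := (\sum_(y <- nb x) (y != v)%:R * f y) / deg x.

Definition inner (L : seq V) (f g : V -> rat) :=
  \sum_(x <- L) (x != v)%:R * deg x * f x * g x.

Definition supported (f : V -> rat) r := forall x, f x != 0 -> x \in ball r.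

(* [deg x] vanishes only for isolated [x], whose neighbour sums are empty. *)
Lemma mul_deg_div x (F : V -> rat) :
  deg x * ((\sum_(y <- nb x) F y) / deg x) = \sum_(y <- nb x) F y.
Proof.
rewrite /deg; case: (nb x) => [|a s]; first by rewrite big_nil !mul0r.
by rewrite mulrC divfK // pnatr_eq0.
Qed.

Lemma supported_killed f r : supported f r -> supported (killed f) r.+1.
Proof.
move=> fr x; apply: contraR => xr; rewrite /killed big1_seq ?mul0r // => y /andP[_ yx].
apply/eqP; rewrite mulf_eq0; apply/orP; right; apply/eqP.
by apply: contraNeq xr => /fr yr; apply: ball_nb yr _; rewrite -nb_sym.
Qed.

Lemma supported_iter_killed a f r : supported f r -> supported (iter a killed f) (r + a).
Proof.
elim: a => [|a IH] fr; first by rewrite addn0.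
by rewrite addnS; apply/supported_killed/IH.
Qed.

Lemma innerC L f g : inner L f g = inner L g f.
Proof. by apply: eq_bigr => x _; rewrite mulrAC. Qed.

Lemma inner_killedE L f g : inner L (killed f) g =
  \sum_(x <- L) \sum_(y <- nb x) (x != v)%:R * (y != v)%:R * f y * g x.
Proof.
apply: eq_bigr => x _; rewrite -(mulrA (x != v)%:R) mul_deg_div mulr_sumr mulr_suml.
by apply: eq_bigr => y _; rewrite !mulrA.
Qed.

Lemma inner_killed_sym R f g r1 r2 :
  supported f r1 -> supported g r2 -> (r1 <= R)%N -> (r2 <= R)%N ->
  inner (ball R) (killed f) g = inner (ball R) f (killed g).
Proof.
move=> fr1 gr2 r1R r2R.
rewrite [RHS]innerC !inner_killedE (exchange_big_adj (ball_uniq R)); last 2 first.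
- move=> x y _ _; rewrite !mulf_eq0 !negb_or => /andP[/andP[_ /fr1 yr1] _].
  exact: ball_mono r1R yr1.
- move=> x y _ _; rewrite !mulf_eq0 !negb_or => /andP[_ /gr2 xr2].
  exact: ball_mono r2R xr2.
apply: eq_bigr => y _; apply: eq_bigr => x _.
by rewrite (mulrC (x != v)%:R) -!mulrA (mulrC (f y)).
Qed.

Lemma inner_iter_killed_sym a R f g r1 r2 :
  supported f r1 -> supported g r2 -> (r1 + a <= R)%N -> (r2 + a <= R)%N ->
  inner (ball R) (iter a killed f) g = inner (ball R) f (iter a killed g).
Proof.
elim: a g r2 => [|a IH] g r2 fr1 gr2 r1R r2R //.
rewrite [iter a.+1 killed f]/= (inner_killed_sym (supported_iter_killed (a := a) fr1) gr2);
  [|lia|lia].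
by rewrite (IH _ r2.+1) ?iterSr //; [apply: supported_killed | lia | lia].
Qed.

(* Expand [0 <= sum_y 1_{y <> v} (Q f x - f y)^2] and use that at most
   [deg x] neighbours differ from [v]. *)
Lemma deg_killed_sqr_le f x :
  deg x * killed f x ^+ 2 <= \sum_(y <- nb x) (y != v)%:R * f y ^+ 2.
Proof.
set q := killed f x; set Sf := \sum_(y <- nb x) _.
have sum_f : \sum_(y <- nb x) (y != v)%:R * f y = deg x * q by rewrite mul_deg_div.
have sum_alive_le : \sum_(y <- nb x) (y != v)%:R <= deg x :> rat.
  by rewrite /deg -sumr_const_seq; apply: ler_sum => y _; rewrite lern1 leq_b1.
have : 0 <= \sum_(y <- nb x) (y != v)%:R * (q - f y) ^+ 2.
  by apply: sumr_ge0 => y _; rewrite mulr_ge0 ?sqr_ge0.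
rewrite (eq_bigr (fun y => q ^+ 2 * (y != v)%:R - (q *+ 2) * ((y != v)%:R * f y)
                           + (y != v)%:R * f y ^+ 2)); last by move=> y _; ring.
rewrite big_split sumrB /= -!mulr_sumr sum_f -/Sf.
have := sqr_ge0 q; nra.
Qed.

Lemma inner_killed_contract R f r : supported f r -> (r < R)%N ->
  inner (ball R) (killed f) (killed f) <= inner (ball R) f f.
Proof.
move=> fr rR.
apply: le_trans (_ : \sum_(x <- ball R) \sum_(y <- nb x)
                       (x != v)%:R * ((y != v)%:R * f y ^+ 2) <= _).
  rewrite /inner; apply: ler_sum => x _; rewrite -mulr_sumr -!(mulrA (x != v)%:R).
  by rewrite ler_wpM2l // -mulrA -expr2 deg_killed_sqr_le.
rewrite (exchange_big_adj (ball_uniq R)); last 2 first.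
- move=> x y _ _; rewrite !mulf_eq0 !negb_or => /and3P[_ _ /andP[/fr yr _]].
  exact: ball_mono (ltnW rR) yr.
- move=> x y _ xy; rewrite !mulf_eq0 !negb_or => /and3P[_ _ /andP[/fr yr _]].
  by apply: ball_mono (ball_nb yr _) => //; rewrite -nb_sym.
rewrite /inner; apply: ler_sum => y _.
apply: le_trans (_ : \sum_(x <- nb y) (y != v)%:R * f y ^+ 2 <= _).
  by apply: ler_sum => x _; rewrite ler_piMl ?lern1 ?leq_b1 // mulr_ge0 ?sqr_ge0.
by rewrite sumr_const_seq /deg -mulr_natr; nra.
Qed.

Definition hit1 x := first_hit nb v 1 x.

Lemma supported_hit1 : supported hit1 1.
Proof.
move=> x; rewrite /hit1 /= sum_eq_mem //.
case vx: (v \in nb x); last by rewrite mul0r eqxx.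
by move=> _; apply: (@ball_nb 0 v); rewrite ?inE // -nb_sym.
Qed.

Lemma supported_iter_hit1 m : supported (iter m killed hit1) m.+1.
Proof. exact: supported_iter_killed supported_hit1. Qed.

Lemma first_hit_iter m x : first_hit nb v m.+1 x = iter m killed hit1 x.
Proof.
elim: m x => [|m IH] x //.
by rewrite iterS /killed -(eq_bigr _ (fun y _ => congr1 _ (IH y))).
Qed.

Lemma return_prob_inner m R : (m < R)%N ->
  return_prob nb v m.+2 = inner (ball R) hit1 (iter m killed hit1) / deg v.
Proof.
move=> mR; rewrite /return_prob first_hit_iter iterS; congr (_ / _).
rewrite (big_seq_restrict (L := ball R)) ?ball_uniq //; last first.
  move=> y yv _; apply: (@ball_mono 1); first lia.
  by apply: (@ball_nb 0 v); rewrite ?inE.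
apply: eq_bigr => x _.
rewrite -(mulrA (x != v)%:R) /hit1 /= mul_deg_div sum_eq_mem // -nb_sym.
by rewrite mulrA (mulrC (v \in nb x)%:R).
Qed.

Lemma return_prob_even m R : (2 * m < R)%N ->
  return_prob nb v (2 * m.+1) =
  inner (ball R) (iter m killed hit1) (iter m killed hit1) / deg v.
Proof.
move=> mR; have -> : (2 * m.+1 = (m + m).+2)%N by lia.
rewrite (return_prob_inner (R := R)); last lia.
by rewrite iterD -(inner_iter_killed_sym supported_hit1 (@supported_iter_hit1 m)); [|lia|lia].
Qed.

End KilledWalk.

Theorem corollary2p3 (V : eqType) (nb : V -> seq V) (v : V) :
  simple_locfin_graph nb -> graph_connected nb -> infinite_type V ->
  forall t : nat, (1 <= t)%N ->
    return_prob nb v (2 * t.+1) <= return_prob nb v (2 * t).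
Proof.
move=> [nb_uniq [_ nb_sym]] _ _ [|s] // _.
rewrite (return_prob_even v nb_uniq nb_sym (R := (2 * s.+1).+1)) //.
rewrite (return_prob_even v nb_uniq nb_sym (R := (2 * s.+1).+1)); last lia.
rewrite ler_wpM2r ?invr_ge0 ?ler0n // iterS.
apply: (inner_killed_contract nb_uniq nb_sym (supported_iter_hit1 nb_uniq nb_sym (m := s))).
lia.
Qed.
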